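(* Let $p$ be a prime with $p\equiv1\pmod 3$, $f=\frac{p-1}{3}$, $G\cong C_p$ with generator $a$, and $l$ a primitive root modulo $p$. For $i\in\{1,2,3\}$ let $X_i=\{a^{l^{3j+(i-1)}}:j=0,\dots,f-1\}$, and for $i,j,k\in\{1,2,3\}$ let $c_{ij}^k$ be the number of pairs $(x,y)\in X_i\times X_j$ with $xy=z$, for a fixed $z\in X_k$ (this number does not depend on $z$). For $i\in\{1,2\}$ let $T_i=\{c_{11}^1+2(i-1),c_{11}^2,c_{11}^3\}$. Then $|T_i|\in\{2,3\}$, and $|T_i|=2$ if and only if $p=t^2+3i^2$ for some integer $t$. *)

From HB Require Import structures.
From mathcomp Require Import all_boot all_order all_fingroup all_algebra.
Set Implicit Arguments. Unset Strict Implicit. Unset Printing Implicit Defensive.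
Import GRing.Theory Num.Theory.

Definition Xcl (gT : finGroupType) (a : gT) (l f i : nat) : {set gT} :=
  [set (a ^+ (l ^ (3 * j + (i - 1)))%N)%g | j : 'I_f].

Definition cnum (gT : finGroupType) (a : gT) (l f i j : nat) (z : gT) : nat :=
  #|[set xy : gT * gT | [&& xy.1 \in Xcl a l f i, xy.2 \in Xcl a l f j
                          & (xy.1 * xy.2)%g == z]]|.

Definition card3 (n1 n2 n3 : nat) : nat := size (undup [:: n1; n2; n3]).

From HB Require Import structures.
From mathcomp Require Import all_boot all_order all_fingroup all_algebra.
From mathcomp Require Import cyclic zify ring.
Import GRing.Theory Num.Theory.

Set Implicit Arguments.
Unset Strict Implicit.
Unset Printing Implicit Defensive.

(* Read through x |-> a^x, the classes X_i are the cosets of the cubes in the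
   multiplicative group of Z_p and the c_{ij}^k are the cyclotomic numbers of
   order 3.  Write A, B, C for c_{11}^1, c_{11}^2, c_{11}^3 and D for c_{12}^3.
   Counting pairs and triples of elements of the classes gives A + B + C + 1 = f,
   B + C + D = f and f + AB + AC + BC = B^2 + C^2 + D^2, whence Gauss's
   4p = L^2 + 27M^2 with L = 9A - p + 8 = 1 (mod 3) and M = B - C.  As p is
   prime, such a representation is unique up to the sign of M and 4p is not a
   square.  Hence B <> C, and A + 2(i-1) is B or C iff L + 4s = +-3M with
   s = 3i - 4, i.e. iff p = (L + 3s)^2 + 3s^2; finally 3s^2 = 3i^2 for i = 1, 2. *)

(* A finite ring with an element g of multiplicative order #|R| - 1 is the
   field F_q (q = #|R|) and g generates its unit group. *)
Section CyclotomicNumbers.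
Variables (R : finNzRingType) (g : R).
Local Notation q := #|R|.
Local Notation f := (q.-1 %/ 3).
Hypotheses (g_prim : (q.-1).-primitive_root%R g) (dvd3q : 3 %| q.-1).

Definition cyclo_class (r : nat) : {set R} :=
  [set (g ^+ (3 * j + r %% 3))%R | j : 'I_f].

Definition cyclo_count (r s : nat) (w : R) : nat :=
  \sum_(x in cyclo_class r) ((w - x)%R \in cyclo_class s).

(* c_{(r+1)(s+1)}^{(t+1)} of the statement, in additive notation. *)
Definition cyclo_num (r s t : nat) : nat := cyclo_count r s (g ^+ t)%R.

Local Notation C := cyclo_class.
Local Notation N := cyclo_count.
Local Notation c := cyclo_num.

Lemma predqE : q.-1 = 3 * f.
Proof. by rewrite mulnC divnK. Qed.

Lemma f_gt0 : 0 < f.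
Proof. by have := prim_order_gt0 g_prim; rewrite predqE; lia. Qed.

Lemma mem_cyclo_class_expr k r : ((g ^+ k)%R \in C r) = (k == r %[mod 3]).
Proof.
apply/imsetP/idP => [[j _ /eqP]|/eqP kr].
  rewrite (eq_prim_root_expr g_prim) => /eqP e.
  by rewrite -(modn_dvdm k dvd3q) e (modn_dvdm _ dvd3q); apply/eqP; lia.
have lt_k : k %% q.-1 %/ 3 < f.
  by rewrite ltn_divLR // mulnC -predqE ltn_mod (prim_order_gt0 g_prim).
exists (Ordinal lt_k) => //=; rewrite -(prim_expr_mod g_prim k).
congr (g ^+ _)%R; rewrite -kr -(modn_dvdm k dvd3q) {1}(divn_eq (k %% q.-1) 3).
by rewrite mulnC.
Qed.

Lemma card_cyclo_class r : #|C r| = f.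
Proof.
rewrite card_imset ?card_ord // => i j /eqP.
move: (predqE) (ltn_ord i) (ltn_ord j) (ltn_pmod r (isT : 0 < 3)) => ? ? ? ?.
rewrite (eq_prim_root_expr g_prim) !(@modn_small _ q.-1) => [/eqP ?||]; try lia.
by apply: ord_inj; lia.
Qed.

Lemma expr_neq0 k : (g ^+ k != 0)%R.
Proof.
apply/eqP => gk0; have := exprAC g k q.-1.
rewrite gk0 (prim_expr_order g_prim) expr1n expr0n gtn_eqF ?(prim_order_gt0 g_prim) //.
by move/eqP; rewrite eq_sym oner_eq0.
Qed.

Lemma cyclo_class_neq0 r : 0%R \notin C r.
Proof. by apply/imsetP => -[j _ /eqP]; rewrite eq_sym (negbTE (expr_neq0 _)). Qed.

Lemma prim_expr_onto x : x != 0%R -> exists k, x = (g ^+ k)%R.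
Proof.
move=> x_neq0.
have powers : [set (g ^+ k)%R | k : 'I_q.-1] = [set~ 0%R].
  apply/eqP; rewrite eqEcard cardsC1 card_imset ?card_ord ?leqnn ?andbT.
    by apply/subsetP => _ /imsetP [k _ ->]; rewrite !inE expr_neq0.
  move=> i j /eqP; rewrite (eq_prim_root_expr g_prim) !modn_small //.
  by move/eqP; apply: val_inj.
have : x \in [set~ 0%R] by rewrite !inE.
by rewrite -powers => /imsetP [k _ ->]; exists k.
Qed.

Lemma sum_cyclo_class_mem x : \sum_(t < 3) (x \in C t) = (x != 0%R).
Proof.
have [->|/prim_expr_onto [k ->]] := eqVneq x 0%R.
  by rewrite big1 // => t _; rewrite (negbTE (cyclo_class_neq0 t)).
rewrite !big_ord_recr big_ord0 /= !mem_cyclo_class_expr.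
by case: (k %% 3) (ltn_pmod k (isT : 0 < 3)) => [|[|[|]]].
Qed.

Lemma cyclo_classM x y r s : x \in C r -> y \in C s -> (x * y)%R \in C (r + s).
Proof.
case/imsetP=> i _ -> /imsetP [j _ ->].
by rewrite -exprD mem_cyclo_class_expr; apply/eqP; lia.
Qed.

Lemma cyclo_class_exprMl k r x : ((g ^+ k * x)%R \in C (k + r)) = (x \in C r).
Proof.
have [->|/prim_expr_onto [m ->]] := eqVneq x 0%R.
  by rewrite mulr0 !(negbTE (cyclo_class_neq0 _)).
by rewrite -exprD !mem_cyclo_class_expr eqn_modDl.
Qed.

Lemma cyclo_class_modn r : C (r %% 3) = C r.
Proof. by rewrite /cyclo_class modn_mod. Qed.

Lemma opp1_cyclo_class0 : (-1)%R \in C 0.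
Proof.
have [k ek] : exists k, (-1)%R = (g ^+ k)%R.
  by apply/prim_expr_onto; rewrite oppr_eq0 oner_eq0.
have : (g ^+ (k * 2) == g ^+ 0)%R by rewrite exprM -ek sqrrN expr1n expr0.
rewrite (eq_prim_root_expr g_prim) mod0n => /(dvdn_trans dvd3q) dvd3k2.
by rewrite ek mem_cyclo_class_expr; apply/eqP; lia.
Qed.

Lemma cyclo_class_opp x r : ((- x)%R \in C r) = (x \in C r).
Proof.
have opp_mem y : y \in C r -> (- y)%R \in C r.
  by move=> y_r; rewrite -mulN1r -[r]add0n cyclo_classM ?opp1_cyclo_class0.
by apply/idP/idP => /opp_mem; rewrite ?opprK.
Qed.

Lemma expr_mul_inj k : injective (GRing.mul (g ^+ k)).
Proof.
apply: (can_inj (g := GRing.mul (g ^+ (k * q.-2)))) => x.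
rewrite mulrA -exprD -mulnSr prednK ?(prim_order_gt0 g_prim) //.
by rewrite mulnC exprM (prim_expr_order g_prim) expr1n mul1r.
Qed.

Lemma cyclo_count_exprMl k r s w : N (k + r) (k + s) (g ^+ k * w)%R = N r s w.
Proof.
rewrite /cyclo_count (reindex_inj (@expr_mul_inj k)) /=.
apply: eq_big => [x|x _]; first exact: cyclo_class_exprMl.
by rewrite -mulrBr cyclo_class_exprMl.
Qed.

Lemma cyclo_countC r s w : N r s w = N s r w.
Proof.
rewrite /cyclo_count big_mkcond [RHS]big_mkcond (reindex_inj (inv_inj (subKr w))) /=.
by apply: eq_bigr => x _; rewrite subKr; case: (x \in C s); case: (_ \in C r).
Qed.

Lemma cyclo_count_class r s t w : w \in C t -> N r s w = c r s t.
Proof.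
have shift3 m u : N r s (g ^+ (3 * m + u))%R = N r s (g ^+ u)%R.
  have mod3 v : (3 * m + v) %% 3 = v %% 3 by rewrite mulnC modnMDl.
  rewrite exprD -[in RHS](cyclo_count_exprMl (3 * m)) /cyclo_count.
  rewrite -(cyclo_class_modn (3 * m + r)) -(cyclo_class_modn (3 * m + s)).
  by rewrite !mod3 !cyclo_class_modn.
case/imsetP=> j _ ->.
by rewrite /cyclo_num {2}(divn_eq t 3) [_ * 3]mulnC !shift3.
Qed.

Lemma sum_cyclo_count_class r s t : \sum_(w in C t) N r s w = f * c r s t.
Proof.
rewrite -(card_cyclo_class t) -sum_nat_const.
by apply: eq_bigr => w; apply: cyclo_count_class.
Qed.

Lemma sum_cyclo_split (F : R -> nat) :
  \sum_x F x = F 0%R + \sum_(t < 3) \sum_(x in C t) F x.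
Proof.
have sum_mem (P : pred R) : \sum_(x | P x) F x = \sum_x P x * F x.
  by rewrite big_mkcond; apply: eq_bigr => x _; case: (P x); rewrite ?mul1n.
rewrite (bigD1 0%R) //= sum_mem.
rewrite (eq_bigr (fun t : 'I_3 => \sum_x (x \in C t) * F x)) => [|t _];
  last exact: sum_mem.
rewrite exchange_big /=; congr (_ + _); apply: eq_bigr => x _.
by rewrite -big_distrl sum_cyclo_class_mem.
Qed.

Lemma sum_cyclo_count r s : \sum_w N r s w = f * f.
Proof.
rewrite exchange_big /= -[X in X * f](card_cyclo_class r) -sum_nat_const.
apply: eq_bigr => x _; rewrite (reindex_inj (addIr x)) /= -(card_cyclo_class s).
rewrite -sum1_card [RHS]big_mkcond; apply: eq_bigr => w _.
by rewrite addrK; case: (w \in C s).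
Qed.

Lemma cyclo_count0 r s : N r s 0%R = (r == s %[mod 3]) * f.
Proof.
rewrite /cyclo_count; under eq_bigr do rewrite sub0r cyclo_class_opp.
have [rs|rs] := eqVneq (r %% 3) (s %% 3).
  rewrite -(cyclo_class_modn s) -rs cyclo_class_modn mul1n -(card_cyclo_class r).
  by rewrite -sum1_card; apply: eq_bigr => x ->.
rewrite big1 // => _ /imsetP [j _ ->]; rewrite mem_cyclo_class_expr.
by case: eqP => // jrs; move: rs; rewrite -jrs; apply: contraNeq; lia.
Qed.

Lemma sum_cyclo_num r s : \sum_(t < 3) c r s t + (r == s %[mod 3]) = f.
Proof.
have := sum_cyclo_count r s.
rewrite sum_cyclo_split cyclo_count0; under eq_bigr do rewrite sum_cyclo_count_class.
rewrite -big_distrr /= => e; apply/eqP; rewrite -(eqn_pmul2l f_gt0) -{}e.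
by rewrite mulnDr addnC mulnC.
Qed.

(* Both sides count the triples of C r * C s * C u with sum a. *)
Lemma cyclo_count_assoc r s u a :
  \sum_w N r s w * ((a - w)%R \in C u) = \sum_w N s u w * ((a - w)%R \in C r).
Proof.
transitivity (\sum_(x in C r) N s u (a - x)%R).
  rewrite /cyclo_count; under eq_bigr do rewrite big_distrl.
  rewrite exchange_big /=; apply: eq_bigr => x _.
  rewrite (reindex_inj (addIr x)) /= [RHS]big_mkcond; apply: eq_bigr => w _.
  by rewrite addrK opprD addrA addrAC; case: (w \in C s); rewrite ?mul1n.
rewrite [RHS](reindex_inj (inv_inj (subKr a))) /= big_mkcond.
by apply: eq_bigr => x _; rewrite subKr mulnC; case: (x \in C r); rewrite ?mul1n.
Qed.

Lemma cyclo_count_mulE r s u a : \sum_w N r s w * ((a - w)%R \in C u)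
  = N r s 0%R * (a \in C u) + \sum_(t < 3) c r s t * N t u a.
Proof.
rewrite sum_cyclo_split subr0; congr (_ + _); apply: eq_bigr => t _.
rewrite [N t u a]/cyclo_count big_distrr; apply: eq_bigr => w.
by move/cyclo_count_class->.
Qed.

Lemma cyclo_num_assoc r s u k :
  (r == s %[mod 3]) * (k == u %[mod 3]) * f + \sum_(t < 3) c r s t * c t u k
  = (s == u %[mod 3]) * (k == r %[mod 3]) * f + \sum_(t < 3) c s u t * c t r k.
Proof.
have := cyclo_count_assoc r s u (g ^+ k)%R.
rewrite !cyclo_count_mulE !cyclo_count0 !mem_cyclo_class_expr.
by rewrite mulnAC [_ * (k == r %[mod 3])]mulnAC.
Qed.

Lemma cyclo_numC r s t : c r s t = c s r t.
Proof. exact: cyclo_countC. Qed.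

Lemma cyclo_num_addn k r s t : c (k + r) (k + s) (k + t) = c r s t.
Proof. by rewrite /cyclo_num exprD cyclo_count_exprMl. Qed.

Lemma cyclo_num_modn r s t : c (r %% 3) (s %% 3) (t %% 3) = c r s t.
Proof.
rewrite /cyclo_num /cyclo_count !cyclo_class_modn.
by apply: cyclo_count_class; rewrite mem_cyclo_class_expr modn_mod.
Qed.

(* Double counting of the pairs (x, w) of C r * C t with w - x in C s,
   using -1 in C 0. *)
Lemma cyclo_num_refl r s t : c r s t = c t s r.
Proof.
apply/eqP; rewrite -(eqn_pmul2l f_gt0) -!sum_cyclo_count_class /cyclo_count.
rewrite exchange_big /=; apply/eqP/eq_bigr => x _; apply: eq_bigr => w _.
by rewrite -cyclo_class_opp opprB.
Qed.

Lemma cyclo_num_relations :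
  [/\ c 0 0 0 + c 0 0 1 + c 0 0 2 + 1 = f, c 0 0 1 + c 0 0 2 + c 0 1 2 = f
    & f + c 0 0 0 * c 0 0 1 + c 0 0 0 * c 0 0 2 + c 0 0 1 * c 0 0 2
      = c 0 0 1 ^ 2 + c 0 0 2 ^ 2 + c 0 1 2 ^ 2].
Proof.
have c010 : c 0 1 0 = c 0 0 1 by rewrite cyclo_numC cyclo_num_refl.
have c011 : c 0 1 1 = c 0 0 2.
  by rewrite cyclo_num_refl -(cyclo_num_addn 2) -cyclo_num_modn.
have c111 : c 1 1 1 = c 0 0 0 by rewrite -(cyclo_num_addn 1 0 0 0).
have c211 : c 2 1 1 = c 0 0 1 by rewrite (cyclo_num_addn 1 1 0 0) cyclo_num_refl.
have c101 : c 1 0 1 = c 0 0 2 by rewrite cyclo_numC.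
have c201 : c 2 0 1 = c 0 1 2.
  by rewrite cyclo_numC cyclo_num_refl -(cyclo_num_addn 2) -cyclo_num_modn.
have := sum_cyclo_num 0 0; have := sum_cyclo_num 0 1; have := cyclo_num_assoc 0 0 1 1.
rewrite !big_ord_recr !big_ord0 /= c010 c011 c111 c211 c101 c201.
split; lia.
Qed.

End CyclotomicNumbers.

Section CyclotomicClassesInCyclicGroup.
Variables (gT : finGroupType) (a : gT) (p l : nat).
Hypotheses (p_gt1 : 1 < p) (ord_a : #[a]%g = p).
Local Notation f := ((p - 1) %/ 3).
Local Notation L := (l%:R : 'Z_p)%R.

Lemma card_Zp_gt1 : #|'Z_p| = p.
Proof. by rewrite card_ord Zp_cast. Qed.

Lemma expg_Zp_inj : injective (fun x : 'Z_p => a ^+ x)%g.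
Proof.
move=> x y /eqP; rewrite eq_expg_mod_order ord_a.
rewrite !modn_small ?(leq_trans (ltn_ord _)) ?Zp_cast //.
by move/eqP/ord_inj.
Qed.

Lemma expg_ZpD (x y : 'Z_p) : (a ^+ (x + y)%R = a ^+ x * a ^+ y)%g.
Proof.
have a_exp : (a ^+ (Zp_trunc p).+2 = 1)%g by rewrite Zp_cast // -ord_a expg_order.
by rewrite -expgD -[RHS](expg_mod _ a_exp).
Qed.

Lemma expg_Zp_natrX k : (a ^+ (L ^+ k)%R = a ^+ (l ^ k))%g.
Proof. by rewrite -natrX val_Zp_nat // -ord_a expg_mod_order. Qed.

Hypotheses (L_prim : (p.-1).-primitive_root%R L) (dvd3p : 3 %| p.-1).

Let L_prim' : (#|'Z_p|.-1).-primitive_root%R L.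
Proof. by rewrite card_Zp_gt1. Qed.

Let dvd3p' : 3 %| #|'Z_p|.-1.
Proof. by rewrite card_Zp_gt1. Qed.

Lemma Xcl1_cyclo_class0 :
  Xcl a l f 1 = [set (a ^+ x)%g | x : 'Z_p in cyclo_class L 0].
Proof.
have ef : #|'Z_p|.-1 %/ 3 = f by rewrite card_Zp_gt1 subn1.
apply/setP => y; apply/imsetP/imsetP => [[j _ ->]|[_ /imsetP [j _ ->] ->]].
  exists (L ^+ (3 * j))%R; last by rewrite expg_Zp_natrX subnn addn0.
  by rewrite (mem_cyclo_class_expr L_prim' dvd3p'); apply/eqP; lia.
by exists (cast_ord ef j) => //=; rewrite expg_Zp_natrX subnn addn0.
Qed.

Lemma cnum_expg_Zp (w : 'Z_p) : cnum a l f 1 1 (a ^+ w)%g = cyclo_count L 0 0 w.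
Proof.
rewrite /cnum Xcl1_cyclo_class0.
set S := [set x in cyclo_class L 0 | (w - x)%R \in cyclo_class L 0].
pose pair (x : 'Z_p) := ((a ^+ x)%g, (a ^+ (w - x)%R)%g).
have -> : [set xy | [&& xy.1 \in [set (a ^+ x)%g | x : 'Z_p in cyclo_class L 0],
                        xy.2 \in [set (a ^+ x)%g | x : 'Z_p in cyclo_class L 0]
                      & (xy.1 * xy.2)%g == (a ^+ w)%g]] = pair @: S.
  apply/setP => xy; rewrite inE; apply/and3P/imsetP.
    case=> /imsetP [x x0 ex] /imsetP [y y0 ey] /eqP.
    rewrite ex ey -expg_ZpD => /expg_Zp_inj wxy.
    have wx : (w - x)%R = y by rewrite -wxy addrC addKr.
    exists x; first by rewrite /S inE x0 wx.
    by rewrite [xy]surjective_pairing ex ey /pair wx.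
  case=> x; rewrite inE => /andP [x0 wx0] ->.
  split; [exact: imset_f | exact: imset_f |].
  by rewrite /pair -expg_ZpD addrC subrK.
rewrite card_imset; last by move=> x y [/expg_Zp_inj].
rewrite -sum1_card; under eq_bigl do rewrite inE.
by rewrite big_mkcondr; apply: eq_bigr => x _; case: (_ \in _).
Qed.

Lemma cnum_cyclo_num t z :
  t < 3 -> z \in Xcl a l f t.+1 -> cnum a l f 1 1 z = cyclo_num L 0 0 t.
Proof.
move=> lt_t3 /imsetP [j _ ->].
rewrite subSS subn0 -expg_Zp_natrX cnum_expg_Zp.
apply: (cyclo_count_class L_prim' dvd3p').
by rewrite (mem_cyclo_class_expr L_prim' dvd3p'); apply/eqP; lia.
Qed.

End CyclotomicClassesInCyclicGroup.

Local Open Scope ring_scope.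

Lemma Euclid_dvdzM (p : nat) (m n : int) :
  prime p -> (p%:Z %| m * n)%Z = (p%:Z %| m)%Z || (p%:Z %| n)%Z.
Proof. by move=> pr_p; rewrite !dvdzE abszM Euclid_dvdM. Qed.

Lemma four_prime_neq_sqr (p : nat) (x : int) : prime p -> 4 * p%:Z != x ^+ 2.
Proof.
move=> pr_p; apply/eqP => /(congr1 absz); rewrite abszM abszX !absz_nat => e.
have {}e : (4 * p = `|x| ^ 2)%N by rewrite -e.
have /dvdnP [k ek] : (p %| `|x|)%N.
  by have := dvdn_mull 4 (dvdnn p); rewrite e Euclid_dvdX // => /andP [].
have p_gt1 := prime_gt1 pr_p.
have /eqP e4 : (4 == k ^ 2 * p)%N.
  by rewrite -(eqn_pmul2r (ltnW p_gt1)) e ek expnMn -mulnA.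
have p4 : p = 4%N.
  by case: k {ek} e4 => [|[|k]] e4; [| rewrite mul1n in e4 | nia].
by move: pr_p; rewrite p4.
Qed.

Lemma four_prime_sqr27_uniq (p : nat) (x y x' y' : int) : prime p -> p != 3%N ->
  4 * p%:Z = x ^+ 2 + 27 * y ^+ 2 -> 4 * p%:Z = x' ^+ 2 + 27 * y' ^+ 2 ->
  x ^+ 2 = x' ^+ 2.
Proof.
move=> pr_p p_neq3 ep ep'.
(* p divides (xx' + 27yy')(xx' - 27yy') = 4p(x'^2 - 27y^2), and then
   (xx' + 27yy')^2 + 27(xy' - x'y)^2 = 16p^2 forces xy' = x'y. *)
have p_neq0 : p%:Z != 0 by rewrite eqz_nat gtn_eqF ?prime_gt0.
wlog dvd_p : y' ep' / (p%:Z %| x * x' + 27 * y * y')%Z.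
  move=> IH; have : (p%:Z %| (x * x' + 27 * y * y') * (x * x' - 27 * y * y'))%Z.
    apply/dvdzP; exists (4 * (x' ^+ 2 - 27 * y ^+ 2)).
    have e1 : x' ^+ 2 * (4 * p%:Z) = x' ^+ 2 * (x ^+ 2 + 27 * y ^+ 2) by rewrite ep.
    have e2 : y ^+ 2 * (4 * p%:Z) = y ^+ 2 * (x' ^+ 2 + 27 * y' ^+ 2) by rewrite ep'.
    lia.
  rewrite Euclid_dvdzM // => /orP [/IH|dvd_m]; first exact.
  by apply: (IH (- y')); rewrite ?sqrrN // mulrN.
have [U eU] := dvdzP dvd_p.
have eQ : (x * x' + 27 * y * y') ^+ 2 + 27 * (x * y' - x' * y) ^+ 2
          = (4 * p%:Z) ^+ 2.
  by rewrite [in RHS]expr2 {1}ep ep'; ring.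
have /dvdzP [V eV] : (p%:Z %| x * y' - x' * y)%Z.
  have : (p%:Z %| 27 * ((x * y' - x' * y) * (x * y' - x' * y)))%Z.
    have -> : 27 * ((x * y' - x' * y) * (x * y' - x' * y))
              = (4 * p%:Z) ^+ 2 - (U * p%:Z) ^+ 2 by rewrite -eQ eU; ring.
    by apply/dvdzP; exists ((16 - U ^+ 2) * p%:Z); ring.
  rewrite !Euclid_dvdzM // orbb => /orP [|//].
  rewrite dvdzE => dvd27; have : (p %| 3 ^ 3)%N := dvd27.
  by rewrite Euclid_dvdX // andbT dvdn_prime2 // (negbTE p_neq3).
have V0 : V = 0.
  have : (U ^+ 2 + 27 * V ^+ 2 - 16) * p%:Z ^+ 2 = 0.
    by rewrite -[RHS](subrr ((4 * p%:Z) ^+ 2)) -{1}eQ eU eV; ring.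
  move/eqP; rewrite mulf_eq0 expf_eq0 (negbTE p_neq0) andbF orbF => /eqP e16.
  have : V ^+ 2 = 0 by have := sqr_ge0 U; have := sqr_ge0 V; clear -e16; lia.
  by move/eqP; rewrite sqrf_eq0 => /eqP.
rewrite V0 mul0r in eV; apply/eqP; rewrite -subr_eq0.
have : (x ^+ 2 - x' ^+ 2) * (4 * p%:Z) = 27 * ((x * y') ^+ 2 - (x' * y) ^+ 2).
  by rewrite mulrBl {1}ep' ep; ring.
have -> : x * y' = x' * y by clear -eV; lia.
move/eqP; rewrite subrr mulr0 mulf_eq0 mulf_eq0 (negbTE p_neq0) orbF.
by case/orP.
Qed.

Lemma gauss_form_shift (p : nat) (L M s : int) : prime p -> (p %% 3 = 1)%N ->
    4 * p%:Z = L ^+ 2 + 27 * M ^+ 2 -> (L %% 3)%Z = 1 -> (s %% 3)%Z = 2 ->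
  (L + 4 * s) ^+ 2 = 9 * M ^+ 2 <-> exists t : int, p%:Z = t ^+ 2 + 3 * s ^+ 2.
Proof.
move=> pr_p p_mod3 eLM L_mod3 s_mod3; split => [e9|[t ept]].
  by exists (L + 3 * s); clear -eLM e9; lia.
have [u [eu u_mod3]] : exists u, u ^+ 2 = t ^+ 2 /\ (u %% 3)%Z = 1.
  have : (t %% 3 = 0 \/ t %% 3 = 1 \/ t %% 3 = 2)%Z by lia.
  case=> [t0|[t1|t2]]; last 2 first.
  - by exists t.
  - by exists (- t); rewrite sqrrN; split => //; lia.
  have [k ek] : exists k, t = 3 * k by exists (t %/ 3)%Z; lia.
  by rewrite ek in ept; clear -ept p_mod3; lia.
have [y ey] : exists y, u + s = 3 * y by exists ((u + s) %/ 3)%Z; lia.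
have e4 : 4 * p%:Z = (u - 3 * s) ^+ 2 + 27 * y ^+ 2.
  have e9 : 9 * y ^+ 2 = (u + s) ^+ 2 by rewrite ey; ring.
  by clear -ept eu e9; lia.
have p_neq3 : p != 3%N by apply/eqP => p3; move: p_mod3; rewrite p3.
have eL : L = u - 3 * s.
  move/eqP: (four_prime_sqr27_uniq pr_p p_neq3 eLM e4).
  rewrite eqf_sqr => /orP [/eqP //|/eqP eL].
  by clear -eL L_mod3 u_mod3 s_mod3; lia.
have -> : L + 4 * s = 3 * y by clear -eL ey; lia.
have -> : M ^+ 2 = y ^+ 2 by rewrite eL in eLM; clear -eLM e4; lia.
by ring.
Qed.

Section OrderThreeRelations.
Variables (p f A B C D : nat).
Hypotheses (pr_p : prime p) (p_eq : p = (3 * f + 1)%N).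
Hypotheses (sumA : (A + B + C + 1 = f)%N) (sumD : (B + C + D = f)%N).
Hypothesis quadr : (f + A * B + A * C + B * C = B ^ 2 + C ^ 2 + D ^ 2)%N.

Let L : int := 9 * A%:Z - p%:Z + 8.
Let M : int := B%:Z - C%:Z.

Lemma gauss_form_cyclo_nums : 4 * p%:Z = L ^+ 2 + 27 * M ^+ 2.
Proof.
have quadrZ : f%:Z + A%:Z * B%:Z + A%:Z * C%:Z + B%:Z * C%:Z
              = B%:Z ^+ 2 + C%:Z ^+ 2 + D%:Z ^+ 2 by lia.
have eA : A%:Z = f%:Z - 1 - B%:Z - C%:Z by lia.
have eD : D%:Z = f%:Z - B%:Z - C%:Z by lia.
have ep : p%:Z = 3 * f%:Z + 1 by lia.
rewrite /L /M eA ep; rewrite eA eD in quadrZ.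
by clear -quadrZ; lia.
Qed.

Lemma gauss_L_mod3 : (L %% 3)%Z = 1.
Proof. by rewrite /L; lia. Qed.

Lemma cyclo_nums_neq : B != C.
Proof.
apply/eqP => BC; apply/negP: (four_prime_neq_sqr L pr_p).
by rewrite gauss_form_cyclo_nums /M BC subrr negbK; apply/eqP; ring.
Qed.

Lemma cyclo_nums_shift_eq (e : nat) : (A + 2 * e == B)%N || (A + 2 * e == C)%N
  <-> exists t : int, p%:Z = t ^+ 2 + 3 * (3 * e%:Z - 1) ^+ 2.
Proof.
have p_mod3 : (p %% 3 = 1)%N by lia.
rewrite -(gauss_form_shift pr_p p_mod3 gauss_form_cyclo_nums gauss_L_mod3);
  last by lia.
suff <- : ((L + 4 * (3 * e%:Z - 1)) ^+ 2 == 9 * M ^+ 2)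
          = (A + 2 * e == B)%N || (A + 2 * e == C)%N by split => /eqP.
have eB : L + 4 * (3 * e%:Z - 1) - 3 * M = 6 * ((A + 2 * e)%:Z - B%:Z).
  by rewrite /L /M; lia.
have eC : L + 4 * (3 * e%:Z - 1) + 3 * M = 6 * ((A + 2 * e)%:Z - C%:Z).
  by rewrite /L /M; lia.
rewrite -subr_eq0 (_ : 9 * M ^+ 2 = (3 * M) ^+ 2); last by ring.
by rewrite subr_sqr eB eC !mulf_eq0 /= !subr_eq0 !eqz_nat.
Qed.

End OrderThreeRelations.

Local Close Scope ring_scope.

Lemma card3_neq23 (n1 n2 n3 : nat) : n2 != n3 ->
  card3 n1 n2 n3 = if (n1 == n2) || (n1 == n3) then 2 else 3.
Proof.
move=> n23; rewrite /card3 /= !inE (negbTE n23).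
by case: (n1 == n2); case: (n1 == n3).
Qed.

Theorem lemma7p3 (gT : finGroupType) (a : gT) (p l : nat)
  (hp : prime p) (hp3 : p %% 3 = 1) (ha : #[a]%g = p)
  (hl : ((p.-1).-primitive_root (l%:R : 'Z_p))%R)
  (z1 z2 z3 : gT)
  (hz1 : z1 \in Xcl a l ((p - 1) %/ 3) 1)
  (hz2 : z2 \in Xcl a l ((p - 1) %/ 3) 2)
  (hz3 : z3 \in Xcl a l ((p - 1) %/ 3) 3) :
  forall i : nat, (i = 1 \/ i = 2) ->
    let f := ((p - 1) %/ 3)%N in
    let T := card3 (cnum a l f 1 1 z1 + 2 * (i - 1)) (cnum a l f 1 1 z2)
                   (cnum a l f 1 1 z3) in
    (T = 2 \/ T = 3) /\
    (T = 2 <-> exists t : int, (p%:Z = t ^+ 2 + 3 * (i%:Z) ^+ 2)%R).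
Proof.
move=> i i12 f T.
have p_gt1 := prime_gt1 hp.
have dvd3p : 3 %| p.-1 by lia.
have cnum_z := cnum_cyclo_num p_gt1 ha hl dvd3p.
rewrite /T (cnum_z 0 z1) // (cnum_z 1 z2) // (cnum_z 2 z3) //.
have L_prim : (#|'Z_p|.-1).-primitive_root%R (l%:R : 'Z_p) by rewrite card_Zp_gt1.
have dvd3 : 3 %| #|'Z_p|.-1 by rewrite card_Zp_gt1.
have [sumA sumD quadr] := cyclo_num_relations L_prim dvd3.
have p_eq : p = 3 * (#|'Z_p|.-1 %/ 3) + 1 by rewrite card_Zp_gt1; lia.
rewrite card3_neq23 ?(cyclo_nums_neq hp p_eq sumA sumD quadr) //.
split; first by case: ifP; [left | right].
have -> : (i%:Z ^+ 2 = (3 * (i - 1)%:Z - 1) ^+ 2)%R by case: i12 => ->.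
rewrite -(cyclo_nums_shift_eq hp p_eq sumA sumD quadr).
by case: ifP => b; split => // /eqP.
Qed.
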